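(* There is an absolute constant $C>0$ such that the following holds. Let $\varepsilon>0$, let $f:\mathbb R\to\mathbb R$ be $1$-smooth, and let $x_-<x_+$ satisfy $f'(x_-)\le-\varepsilon$ and $0\le f(x_-)-f(x_+)\le\frac{\varepsilon}{4}(x_+-x_-)$. Then BinarySearchII$(x_-,x_+)$ terminates and outputs an $\varepsilon$-stationary point of $f$ using at most $C\bigl(1+\max\{0,\log\frac{x_+-x_-}{\varepsilon}\}\bigr)$ oracle queries.
   Context: $f:\mathbb R\to\mathbb R$ is $1$-smooth if it is continuously differentiable and $f'$ is $1$-Lipschitz; $x$ is an $\varepsilon$-stationary point if $|f'(x)|<\varepsilon$. The oracle returns $(f(x),f'(x))$ on query $x$; values at already-queried points (including $x_\pm$) are reused. Subroutines (a recursive call's output is returned unchanged): BinarySearch$(x_0,x_1)$: $m=(x_0+x_1)/2$; if $|f'(m)|<\varepsilon$ return $m$; if $f'(m)\le-\varepsilon$ return BinarySearch$(m,x_1)$; if $f'(m)>0$ return BinarySearch$(x_0,m)$. BinarySearchIII$(x_-,x_+)$: $m=(x_-+x_+)/2$; if $|f'(m)|<\varepsilon$ return $m$; else if $f'(m)>0$ return BinarySearch$(x_-,m)$; else if $f(m)\ge f(x_-)$ return BinarySearchIII$(x_-,m)$; else return BinarySearchIII$(m,x_+)$. BinarySearchII$(x_-,x_+)$: $m=(x_-+x_+)/2$; if $|f'(m)|<\varepsilon$ return $m$; else if $f'(m)>0$ return BinarySearch$(x_-,m)$; else if $f(m)\ge f(x_-)$ return BinarySearchIII$(x_-,m)$;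 else if $f(m)\le f(x_+)$ return BinarySearchIII$(m,x_+)$; else if $f(x_-)-f(m)\le\frac12(f(x_-)-f(x_+))$ return BinarySearchII$(x_-,m)$; else return BinarySearchII$(m,x_+)$. *)

From Stdlib Require Import Reals Lra.
Open Scope R_scope.

(* f : R -> R is 1-smooth, with derivative f' (f' continuous follows from
   the 1-Lipschitz property). *)
Definition one_smooth (f f' : R -> R) : Prop :=
  (forall x, derivable_pt_lim f x (f' x)) /\
  (forall x y, Rabs (f' x - f' y) <= Rabs (x - y)).

Definition add_query (r : option (R * nat)) : option (R * nat) :=
  match r with
  | Some (m, q) => Some (m, S q)
  | None => None
  end.

Section Algorithms.
Variables (f f' : R -> R) (eps : R).

(* Fuel-bounded executions: [None] means "fuel exhausted" (or an impossible
   branch); [Some (m, q)] means the procedure returned m after q oracle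
   queries (one new query, at the midpoint, per call; endpoint values are
   reused). *)
Fixpoint BinarySearch (fuel : nat) (x0 x1 : R) : option (R * nat) :=
  match fuel with
  | O => None
  | S n =>
    let m := (x0 + x1) / 2 in
    if Rlt_dec (Rabs (f' m)) eps then Some (m, 1%nat)
    else if Rle_dec (f' m) (- eps) then add_query (BinarySearch n m x1)
    else if Rlt_dec 0 (f' m) then add_query (BinarySearch n x0 m)
    else None
  end.

Fixpoint BinarySearchIII (fuel : nat) (xm xp : R) : option (R * nat) :=
  match fuel with
  | O => None
  | S n =>
    let m := (xm + xp) / 2 in
    if Rlt_dec (Rabs (f' m)) eps then Some (m, 1%nat)
    else if Rlt_dec 0 (f' m) then add_query (BinarySearch n xm m)
    else if Rle_dec (f xm) (f m) then add_query (BinarySearchIII n xm m)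
    else add_query (BinarySearchIII n m xp)
  end.

Fixpoint BinarySearchII (fuel : nat) (xm xp : R) : option (R * nat) :=
  match fuel with
  | O => None
  | S n =>
    let m := (xm + xp) / 2 in
    if Rlt_dec (Rabs (f' m)) eps then Some (m, 1%nat)
    else if Rlt_dec 0 (f' m) then add_query (BinarySearch n xm m)
    else if Rle_dec (f xm) (f m) then add_query (BinarySearchIII n xm m)
    else if Rle_dec (f m) (f xp) then add_query (BinarySearchIII n m xp)
    else if Rle_dec (f xm - f m) ((f xm - f xp) / 2)
         then add_query (BinarySearchII n xm m)
    else add_query (BinarySearchII n m xp)
  end.

End Algorithms.

(* Every call works on a bracket [x0, x1] of length at least 3 eps / 2: for
   BinarySearch because f' rises by 2 eps across it and f' is 1-Lipschitz,
   for BinarySearchII/III because f drops by at most eps/4 (resp. 0) per unit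
   length although its slope at x0 is <= -eps, which the quadratic upper
   bound of a 1-smooth function forbids on short intervals. Each recursive
   call halves the bracket and keeps one of these invariants, so after q + 1
   queries 2^q (3 eps / 2) <= x+ - x-, i.e. q = O(log ((x+ - x-) / eps)). *)

From Stdlib Require Import Reals Lra Psatz.
From Coquelicot Require Import Coquelicot.
Open Scope R_scope.

Section OneSmooth.

Variables f f' : R -> R.
Hypothesis smooth : one_smooth f f'.

Lemma one_smooth_quadratic_upper_bound x y : x < y ->
  f y <= f x + f' x * (y - x) + (y - x) ^ 2 / 2.
Proof.
  intros Hxy; destruct smooth as [Hder Hlip].
  pose (g t := f t - (f' x * t + (t - x) ^ 2 / 2)).
  assert (Hg : forall c, x <= c <= y ->
            derivable_pt_lim g c (f' c - (f' x + (c - x)))).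
  { intros c _; apply derivable_pt_lim_minus; [apply Hder|].
    apply is_derive_Reals; auto_derive; [easy | lra]. }
  destruct (MVT_cor2 g _ x y Hxy Hg) as [c [Hmvt Hc]]; unfold g in Hmvt.
  assert (Hslope : f' c - f' x <= c - x).
  { pose proof (Hlip c x); pose proof (Rle_abs (f' c - f' x)).
    rewrite (Rabs_right (c - x)) in * by lra; lra. }
  assert ((f' c - (f' x + (c - x))) * (y - x) <= 0) by (apply Rmult_le_0_r; lra).
  lra.
Qed.

Lemma one_smooth_derivative_increase x y : x < y -> f' y - f' x <= y - x.
Proof.
  intros Hxy; destruct smooth as [_ Hlip].
  pose proof (Hlip y x); pose proof (Rle_abs (f' y - f' x)).
  rewrite (Rabs_right (y - x)) in * by lra; lra.
Qed.

(* A slope <= -g at x0 forces a drop of about g per unit length on a short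
   interval, so a drop of at most a per unit length needs length 2 (g - a). *)
Lemma one_smooth_small_decrease_length x0 x1 g a : x0 < x1 ->
  f' x0 <= - g -> f x0 - f x1 <= a * (x1 - x0) -> 2 * (g - a) <= x1 - x0.
Proof.
  intros Hx Hslope Hdrop.
  pose proof (one_smooth_quadratic_upper_bound x0 x1 Hx).
  assert (f' x0 * (x1 - x0) <= - g * (x1 - x0)) by (apply Rmult_le_compat_r; lra).
  nra.
Qed.

End OneSmooth.

Lemma Rabs_not_lt v e : ~ Rabs v < e -> v <= - e \/ e <= v.
Proof. unfold Rabs; destruct (Rcase_abs v); lra. Qed.

Section Correctness.

Variables (f f' : R -> R) (eps : R).
Hypotheses (eps_pos : 0 < eps) (smooth : one_smooth f f').

(* The run [r] returns an eps-stationary point after q + 1 queries, and the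
   q halvings it performed started from a bracket of length >= L. *)
Definition stationary_within (r : option (R * nat)) (L : R) : Prop :=
  exists m q, r = Some (m, S q) /\ Rabs (f' m) < eps /\
    2 ^ q * (3 * eps / 2) <= L.

Lemma stationary_within_midpoint m L :
  Rabs (f' m) < eps -> 3 * eps / 2 <= L -> stationary_within (Some (m, 1%nat)) L.
Proof. intros Hm HL; exists m, 0%nat; simpl; repeat split; lra. Qed.

Lemma stationary_within_add_query r L L' :
  stationary_within r L -> 2 * L <= L' -> stationary_within (add_query r) L'.
Proof.
  intros [m [q [-> [Hm Hq]]]] HL; exists m, (S q); simpl; repeat split; lra.
Qed.

Ltac recurse IH :=
  eapply stationary_within_add_query; [apply IH | ..]; lra.

Lemma BinarySearch_correct n : forall x0 x1,
  x0 < x1 -> f' x0 <= - eps -> eps <= f' x1 ->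
  x1 - x0 < 2 ^ n * (3 * eps / 2) ->
  stationary_within (BinarySearch f' eps n x0 x1) (x1 - x0).
Proof.
  induction n as [|n IHn]; intros x0 x1 Hx Hf'0 Hf'1 Hfuel;
    pose proof (one_smooth_derivative_increase f f' smooth x0 x1 Hx);
    simpl in Hfuel |- *; [lra|].
  destruct (Rlt_dec (Rabs (f' ((x0 + x1) / 2))) eps) as [Hstat|Hstat].
  { apply stationary_within_midpoint; lra. }
  apply Rabs_not_lt in Hstat.
  destruct (Rle_dec (f' ((x0 + x1) / 2)) (- eps)); [recurse IHn|].
  destruct (Rlt_dec 0 (f' ((x0 + x1) / 2))); [recurse IHn | lra].
Qed.

Lemma BinarySearchIII_correct n : forall x0 x1,
  x0 < x1 -> f' x0 <= - eps -> f x0 <= f x1 ->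
  x1 - x0 < 2 ^ n * (3 * eps / 2) ->
  stationary_within (BinarySearchIII f f' eps n x0 x1) (x1 - x0).
Proof.
  induction n as [|n IHn]; intros x0 x1 Hx Hf'0 Hf Hfuel;
    pose proof (one_smooth_small_decrease_length f f' smooth x0 x1 eps 0 Hx Hf'0);
    simpl in Hfuel |- *; [lra|].
  destruct (Rlt_dec (Rabs (f' ((x0 + x1) / 2))) eps) as [Hstat|Hstat].
  { apply stationary_within_midpoint; lra. }
  apply Rabs_not_lt in Hstat.
  destruct (Rlt_dec 0 (f' ((x0 + x1) / 2))); [recurse BinarySearch_correct|].
  destruct (Rle_dec (f x0) (f ((x0 + x1) / 2))); recurse IHn.
Qed.

Lemma BinarySearchII_correct n : forall x0 x1,
  x0 < x1 -> f' x0 <= - eps -> 0 <= f x0 - f x1 <= eps / 4 * (x1 - x0) ->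
  x1 - x0 < 2 ^ n * (3 * eps / 2) ->
  stationary_within (BinarySearchII f f' eps n x0 x1) (x1 - x0).
Proof.
  induction n as [|n IHn]; intros x0 x1 Hx Hf'0 Hf Hfuel;
    pose proof (one_smooth_small_decrease_length
                  f f' smooth x0 x1 eps (eps / 4) Hx Hf'0 (proj2 Hf));
    simpl in Hfuel |- *; [lra|].
  destruct (Rlt_dec (Rabs (f' ((x0 + x1) / 2))) eps) as [Hstat|Hstat].
  { apply stationary_within_midpoint; lra. }
  apply Rabs_not_lt in Hstat.
  destruct (Rlt_dec 0 (f' ((x0 + x1) / 2))); [recurse BinarySearch_correct|].
  destruct (Rle_dec (f x0) (f ((x0 + x1) / 2))); [recurse BinarySearchIII_correct|].
  destruct (Rle_dec (f ((x0 + x1) / 2)) (f x1)); [recurse BinarySearchIII_correct|].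
  destruct (Rle_dec (f x0 - f ((x0 + x1) / 2)) ((f x0 - f x1) / 2)); recurse IHn.
Qed.

End Correctness.

Lemma pow2_exceeds b : exists n, b < 2 ^ n.
Proof.
  destruct (Pow_x_infinity 2 ltac:(rewrite Rabs_right; lra) (b + 1)) as [n Hn].
  exists n; specialize (Hn n (le_n n)).
  rewrite Rabs_right in Hn by (apply Rle_ge, pow_le; lra); lra.
Qed.

Lemma halvings_log_bound eps L q : 0 < eps ->
  2 ^ q * (3 * eps / 2) <= L -> INR (S q) <= 2 * (1 + Rmax 0 (ln (L / eps))).
Proof.
  intros Heps HL.
  assert (Hpow : 2 ^ q <= L / eps).
  { apply Rmult_le_reg_r with eps; [easy|].
    unfold Rdiv; rewrite Rmult_assoc, Rinv_l by lra.
    assert (0 < 2 ^ q) by (apply pow_lt; lra); nra. }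
  assert (Hln : INR q * ln 2 <= ln (L / eps)).
  { rewrite <- ln_pow by lra; apply ln_le; [apply pow_lt; lra | easy]. }
  pose proof ln_lt_2; pose proof (pos_INR q).
  pose proof (Rmax_r 0 (ln (L / eps))).
  rewrite S_INR; nra.
Qed.

Theorem lemmaA6 :
  exists C : R, 0 < C /\
  forall (eps : R) (f f' : R -> R) (xm xp : R),
    0 < eps ->
    one_smooth f f' ->
    xm < xp ->
    f' xm <= - eps ->
    0 <= f xm - f xp <= eps / 4 * (xp - xm) ->
    exists (fuel : nat) (m : R) (q : nat),
      BinarySearchII f f' eps fuel xm xp = Some (m, q) /\
      Rabs (f' m) < eps /\
      INR q <= C * (1 + Rmax 0 (ln ((xp - xm) / eps))).
Proof.
  exists 2; split; [lra|].
  intros eps f f' xm xp Heps Hsmooth Hx Hf'm Hf.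
  destruct (pow2_exceeds ((xp - xm) / (3 * eps / 2))) as [n Hn].
  assert (Hfuel : xp - xm < 2 ^ n * (3 * eps / 2)).
  { apply Rmult_lt_compat_r with (r := 3 * eps / 2) in Hn; [|lra].
    unfold Rdiv at 1 in Hn; rewrite Rmult_assoc, Rinv_l in Hn by lra; lra. }
  destruct (BinarySearchII_correct f f' eps Heps Hsmooth n xm xp Hx Hf'm Hf Hfuel)
    as [m [q [Hrun [Hm Hq]]]].
  exists n, m, (S q); repeat split; [easy | easy |].
  exact (halvings_log_bound eps (xp - xm) q Heps Hq).
Qed.
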